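(* Let $F=\begin{pmatrix}-1&-1&-1\\-1&8&-1\\-1&-1&-1\end{pmatrix}$ (edge detect C filter). Then for all $m,n\in\mathbb{N}$, it is not the case that the equation $F*X=B$ with the reflexive boundary condition, for unknown $X\in\mathbb{R}^{m\times n}$, has a unique solution for every $B\in\mathbb{R}^{m\times n}$.
   Context: For $F=[f_{ij}]\in\mathbb{R}^{3\times3}$ and $X=[x_{ij}]\in\mathbb{R}^{m\times n}$, the convolution $F*X\in\mathbb{R}^{m\times n}$ is defined by $[F*X]_{ij}=\sum_{l_1=1}^3\sum_{l_2=1}^3 f_{l_1l_2}\,x_{i-l_1+2,\,j-l_2+2}$ for $1\le i\le m$, $1\le j\le n$, where the reflexive boundary condition sets $x_{0j}=x_{1j}$, $x_{m+1,j}=x_{mj}$, $x_{i0}=x_{i1}$, $x_{i,n+1}=x_{in}$ (for all indices $i\in\{0,\dots,m+1\}$, $j\in\{0,\dots,n+1\}$, so corners are also determined, e.g. $x_{00}=x_{11}$). *)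

From HB Require Import structures.
From mathcomp Require Import all_boot all_order all_algebra.
From mathcomp Require Import reals.
Set Implicit Arguments. Unset Strict Implicit. Unset Printing Implicit Defensive.
Import Order.TTheory GRing.Theory Num.Theory.
Local Open Scope ring_scope.

(* 0-based indices: for i : 'I_m and l : 'I_3 (l = l_1 - 1), the row index
   i - l + 1 (0-based counterpart of i - l_1 + 2), with the reflexive
   boundary condition: -1 is sent to 0 and m is sent to m-1. *)
Definition refl_idx (m : nat) (i : 'I_m) (l : 'I_3) : 'I_m :=
  insubd i (minn (i.+1 - l) m.-1)%N.

Definition conv_refl (R : nzRingType) (m n : nat) (F : 'M[R]_3) (X : 'M[R]_(m, n))
  : 'M[R]_(m, n) :=
  \matrix_(i < m, j < n)
    \sum_(l1 < 3) \sum_(l2 < 3) F l1 l2 * X (refl_idx i l1) (refl_idx j l2).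

Definition edgeC (R : nzRingType) : 'M[R]_3 :=
  \matrix_(i < 3, j < 3) (if (i == 1 :> nat) && (j == 1 :> nat) then 8 else -1).

From HB Require Import structures.
From mathcomp Require Import all_boot all_order all_algebra.
From mathcomp Require Import reals.
Local Open Scope ring_scope.
Import GRing.Theory.

(* Under the reflexive boundary condition a constant image [c] is mapped to the
   constant [(sum of the entries of F) * c]; the entries of the edge detect C
   filter sum to [8 - 8 = 0], so every constant matrix lies in its kernel and
   [B = 0] has at least the two solutions [0] and the all-ones matrix. *)

Lemma unique_solutions_inj (T U : Type) (f : T -> U) :
  (forall b, exists! x, f x = b) -> injective f.
Proof.
move=> uniq_sol x y fxy; have [z [_ z_uniq]] := uniq_sol (f x).
by rewrite -(z_uniq x erefl) (z_uniq y (esym fxy)).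
Qed.

Lemma conv_refl_const (R : nzRingType) (m n : nat) (F : 'M[R]_3) (c : R) :
  conv_refl F (const_mx c : 'M_(m, n)) =
  const_mx ((\sum_(l1 < 3) \sum_(l2 < 3) F l1 l2) * c).
Proof.
apply/matrixP => i j; rewrite !mxE mulr_suml.
by apply: eq_bigr => l1 _; rewrite mulr_suml; apply: eq_bigr => l2 _; rewrite mxE.
Qed.

Lemma edgeC_sum (R : nzRingType) : \sum_(l1 < 3) \sum_(l2 < 3) edgeC R l1 l2 = 0.
Proof.
by rewrite !big_ord_recr !big_ord0 /= !mxE /= !add0r -!addrA !(addrCA (-1)) ?addKr ?addNKr ?subrr.
Qed.

Lemma conv_refl_edgeC_const (R : nzRingType) (m n : nat) (c : R) :
  conv_refl (edgeC R) (const_mx c : 'M_(m, n)) = 0.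
Proof.
by apply/matrixP => i j; rewrite conv_refl_const edgeC_sum mul0r !mxE.
Qed.

Theorem corollary15 (R : realType) (m n : nat) :
  (0 < m)%N -> (0 < n)%N ->
  ~ (forall B : 'M[R]_(m, n), exists! X : 'M[R]_(m, n), conv_refl (edgeC R) X = B).
Proof.
move=> m_gt0 n_gt0 /unique_solutions_inj conv_inj.
have const_eq : const_mx 0 = const_mx 1 :> 'M[R]_(m, n).
  by apply: conv_inj; rewrite !conv_refl_edgeC_const.
have := congr1 (fun X : 'M[R]_(m, n) => X (Ordinal m_gt0) (Ordinal n_gt0)) const_eq.
by rewrite !mxE => /eqP; rewrite eq_sym oner_eq0.
Qed.
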